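(* Let $t\ge1$, $F=\mathbb{F}_{2^t}$, $A\subseteq F$ and $\alpha^*\in A$. Let $z_1,\dots,z_t\in F$ be such that $\beta_i:=\alpha^*-z_i$, $i=1,\dots,t$, form a basis of $F$ over $\mathbb{F}_2$, and let $g_i(x)=\beta_i(x-z_i)$. Then for every $\alpha\in A\setminus\{\alpha^*\}$, $\mathrm{rank}_{\mathbb{F}_2}\{g_1(\alpha),\dots,g_t(\alpha)\}\le t-1$. *)

From HB Require Import structures.
From mathcomp Require Import all_boot all_order all_algebra all_field.
Set Implicit Arguments. Unset Strict Implicit. Unset Printing Implicit Defensive.
Import GRing.Theory.
Local Open Scope ring_scope.

(* Linear algebra over F_2 inside a field F of characteristic 2, written out
   concretely: an F_2-linear combination of a family v : 'I_n -> F is a sum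
   \sum_(i in T) v i over a subset T (the coefficients are 0 or 1). *)

Definition F2indep (F : finFieldType) (n : nat) (v : 'I_n -> F) (S : {set 'I_n}) : bool :=
  [forall T : {set 'I_n}, ((T \subset S) && (\sum_(i in T) v i == 0)) ==> (T == set0)].

Definition F2spans (F : finFieldType) (n : nat) (v : 'I_n -> F) : Prop :=
  forall x : F, exists T : {set 'I_n}, x = \sum_(i in T) v i.

Definition F2basis (F : finFieldType) (n : nat) (v : 'I_n -> F) : Prop :=
  F2indep v setT /\ F2spans v.

Definition F2rank (F : finFieldType) (n : nat) (v : 'I_n -> F) : nat :=
  \max_(S : {set 'I_n} | F2indep v S) #|S|.

From HB Require Import structures.
From mathcomp Require Import all_boot all_order all_algebra all_field.
Set Implicit Arguments. Unset Strict Implicit. Unset Printing Implicit Defensive.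
Import GRing.Theory.
Local Open Scope ring_scope.

(* Put c := alpha - alpha*, so that g_i(alpha) = beta_i (c + beta_i).  Since
   alpha <> alpha*, c is a nonempty sum c = sum_(i in T) beta_i of basis
   vectors, and in characteristic 2 squaring is additive, so
   sum_(i in T) g_i(alpha) = c^2 + c c = 0: a nontrivial F_2-relation among
   the g_i(alpha), which forbids rank t.  Only alpha <> alpha* matters. *)

Lemma sum_mulDsum_pchar2 (R : comNzRingType) (I : finType) (T : {set I})
    (b : I -> R) :
  2%N \in [pchar R] -> \sum_(i in T) b i * (\sum_(j in T) b j + b i) = 0.
Proof.
move=> ch2; set s := \sum_(j in T) b j.
have sqr_s : s ^+ 2 = \sum_(i in T) b i ^+ 2.
  rewrite -(pFrobenius_autE ch2) rmorph_sum.
  by apply: eq_bigr => i _; apply: pFrobenius_autE.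
under eq_bigr do rewrite mulrDr -expr2.
by rewrite big_split /= -sqr_s -mulr_suml expr2 addrr_pchar2.
Qed.

Lemma F2indep_sum_eq0 (F : finFieldType) (n : nat) (v : 'I_n -> F) (S T : {set 'I_n}) :
  F2indep v S -> T \subset S -> \sum_(i in T) v i = 0 -> T = set0.
Proof. by move=> /forallP /(_ T) indS sTS sumT; apply/eqP; rewrite sTS sumT eqxx in indS. Qed.

Lemma F2rank_lt (F : finFieldType) (n : nat) (v : 'I_n -> F) (T : {set 'I_n}) :
  T != set0 -> \sum_(i in T) v i = 0 -> (F2rank v < n)%N.
Proof.
move=> T0 sumT; have n_gt0 : (0 < n)%N.
  by case/set0Pn: T0 => i _; apply: leq_ltn_trans (ltn_ord i).
suff rank_le : (F2rank v <= n.-1)%N by apply: leq_ltn_trans rank_le _; rewrite ltn_predL.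
apply/bigmax_leqP => S indS.
have := subset_leq_card (subsetT S); rewrite cardsT card_ord => S_le.
rewrite -ltnS prednK // ltn_neqAle S_le andbT; apply: contra T0 => /eqP cardS.
have S_full : S = [set: 'I_n].
  by apply/eqP; rewrite eqEcard (subsetT S) cardsT card_ord cardS /=.
by rewrite S_full in indS; rewrite (F2indep_sum_eq0 indS (subsetT T) sumT).
Qed.

Theorem lemma3 (t : nat) (F : finFieldType) (ht : (1 <= t)%N)
  (hcard : #|F| = (2 ^ t)%N) (A : {set F}) (astar : F) (hA : astar \in A)
  (z : 'I_t -> F) (hbasis : F2basis (fun i => astar - z i)) :
  forall alpha : F, alpha \in A -> alpha != astar ->
    leq (F2rank (fun i : 'I_t => (astar - z i) * (alpha - z i))) (t - 1)%N.
Proof.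
move=> alpha _ alpha_neq.
have ch2 : 2%N \in [pchar F] by apply: card_finPcharP hcard _.
have [_ /(_ (alpha - astar)) [T c_def]] := hbasis.
have T0 : T != set0.
  by apply: contraNneq alpha_neq => T0; rewrite -subr_eq0 c_def T0 big_set0.
rewrite subn1 -ltnS prednK //; apply: (F2rank_lt T0).
under eq_bigr do rewrite -(subrKA astar alpha) c_def.
exact: sum_mulDsum_pchar2.
Qed.
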